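(* Let $\mathbb{Z}_{\ge 0}$ be the commutative monoid of nonnegative integers under addition. Then the simplicial set $K(\mathbb{Z}_{\ge 0},2)$ is a Skvortsov–Shehtman complex but is not a Kan complex.
   Context: For a commutative monoid $M$ (written multiplicatively), $K(M,2)$ is the simplicial set whose $n$-simplices are families $(a_{ijk})_{0\le i<j<k\le n}$ of elements of $M$ satisfying $a_{ikl}a_{ijk}=a_{ijl}a_{jkl}$ for all $0\le i<j<k<l\le n$; the $j$-th face map omits all entries involving the index $j$ (and reindexes), and the $j$-th degeneracy map repeats the index $j$, inserting the unit of $M$ at the new entries (it is the Duskin nerve of the one-object, one-1-morphism 2-category whose 2-morphisms are the elements of $M$). For $M=\mathbb{Z}_{\ge0}$ the monoid operation is addition, so the relations read $a_{ikl}+a_{ijk}=a_{ijl}+a_{jkl}$. A simplicial set $S$ is a Skvortsov–Shehtman complex (SS-complex) if it satisfies all Beck–Chevalley conditions $\mathrm{BC}_{p,q}[n]$: for all $n>1$ and all $0\le p<q\le n$, for any $(n-1)$-simplices $c_p,c_q$ of $S$ with $d_pc_q=d_{q-1}c_p$ there exists an $n$-simplex $x$ of $S$ with $d_px=c_p$ and $d_qx=c_q$. A Kan complex is a simplicial set satisfying the Kan horn-filling conditions for all $n>0$, $0\le p\le n$. *)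

From mathcomp Require Import all_boot zify.
Set Implicit Arguments. Unset Strict Implicit. Unset Printing Implicit Defensive.

(* [simp S n] is the type of n-simplices; [face S n j] is d_j from     *)
(* (n+1)-simplices to n-simplices, j = 0..n+1.  Degeneracies play no   *)
(* role in the Beck-Chevalley or Kan conditions and are omitted.       *)
Record sset := SSet {
  simp : nat -> Type;
  face : forall n : nat, 'I_n.+2 -> simp n.+1 -> simp n
}.

(* Beck-Chevalley condition BC_{p,q}[n] for n = m+2 > 1, 0 <= p < q <= n:
   c_p, c_q are (n-1)-simplices with d_p c_q = d_{q-1} c_p. *)
Definition BC (S : sset) (m p q : nat) : Prop :=
  forall cp cq : simp S m.+1,
    face (inord p) cq = face (inord q.-1) cp ->
    exists x : simp S m.+2, face (inord p) x = cp /\ face (inord q) x = cq.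

Definition SS_complex (S : sset) : Prop :=
  forall m p q : nat, p < q -> q <= m.+2 -> BC S m p q.

(* A (n,p)-horn is a family
   (y_i)_{i <> p} of (n-1)-simplices with d_i y_j = d_{j-1} y_i for i < j
   (both different from p); a filler is an n-simplex x with d_i x = y_i
   for all i <> p.  Case n = 1 (no compatibility) and n = m+2 are separated
   because 0-simplices have no faces. *)
Definition Kan_complex (S : sset) : Prop :=
  (forall (p : 'I_2) (y : 'I_2 -> simp S 0),
      exists x : simp S 1, forall i : 'I_2, i != p -> face i x = y i) /\
  (forall (m : nat) (p : 'I_m.+3) (y : 'I_m.+3 -> simp S m.+1),
      (forall i j : 'I_m.+3, i < j -> i != p -> j != p ->
          face (inord i) (y j) = face (inord j.-1) (y i)) ->
      exists x : simp S m.+2, forall i : 'I_m.+3, i != p -> face i x = y i).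

(* K(M,2) for a commutative monoid (M, op, idx).  An n-simplex is a    *)
(* family a_{ijk}, 0 <= i < j < k <= n, satisfying                     *)
(*   a_{ikl} a_{ijk} = a_{ijl} a_{jkl}.                                *)
(* It is stored as a function on triples of vertices whose entries     *)
(* outside i<j<k are normalized to the unit (so equality of simplices  *)
(* is equality of the families).                                       *)
Section KM2.
Variables (M : Type) (idx : M) (op : Monoid.com_law idx).

Record KM2_simplex (n : nat) := KM2S {
  kval : 'I_n.+1 -> 'I_n.+1 -> 'I_n.+1 -> M;
  kjunk : forall i j k : 'I_n.+1, ~~ ((i < j) && (j < k)) -> kval i j k = idx;
  kcoc : forall i j k l : 'I_n.+1, i < j -> j < k -> k < l ->
     op (kval i k l) (kval i j k) = op (kval i j l) (kval j k l)
}.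

Lemma lift_ltn n (h : 'I_n.+1) (i j : 'I_n) : (lift h i < lift h j) = (i < j).
Proof.
rewrite /lift /= /bump.
case: (leqP h i) => Hi; case: (leqP h j) => Hj /=;
  apply/idP/idP => H; lia.
Qed.

Definition KM2_face n (j : 'I_n.+2) (a : KM2_simplex n.+1) : KM2_simplex n.
Proof.
refine (@KM2S n (fun i k l => kval a (lift j i) (lift j k) (lift j l)) _ _).
- by move=> i k l H; apply: kjunk; rewrite !lift_ltn.
- by move=> i k l r H1 H2 H3; apply: kcoc; rewrite lift_ltn.
Defined.

Definition KM2 : sset := @SSet KM2_simplex KM2_face.
End KM2.

Definition K_nat_2 : sset := @KM2 nat 0 addn.

From mathcomp Require Import all_boot all_order all_algebra zify.
From Stdlib Require Import FunctionalExtensionality ProofIrrelevance.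
Set Implicit Arguments. Unset Strict Implicit. Unset Printing Implicit Defensive.
Import Order.TTheory GRing.Theory Num.Theory.

(* K(N,2) is not Kan: the (3,1)-horn whose faces d_0, d_2 vanish and whose face
   d_3 has entry 1 has no filler, since a filler would satisfy
   a_023 + 1 = a_013 + a_123 = 0.

   Beck-Chevalley: a filler x of (c_p, c_q) is forced on every triple missing p
   or q, and its remaining entries b(r) = x_{p,q,r} only meet the cocycle
   conditions on quadruples {p, q, r, s}. In the alternating extension of x to
   integer values these conditions say that the oriented entry on (p, q, r),
   which is b(r) for r outside [p, q] and -b(r) for r inside, equals
   phi(r) - t for a function phi computed from c_p and c_q and an arbitrary
   constant t. The cocycle conditions of c_p and c_q give phi(r) <= phi(s) for
   r inside and s outside [p, q], so t can be chosen between these values, and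
   then every b(r) is a natural number. *)

Lemma ltn_bump2 h i j : (bump h i < bump h j) = (i < j).
Proof. by rewrite !ltnNge leq_bump2. Qed.

Lemma leq_bump_succ h x n : h <= n.+1 -> (bump h x <= n.+1) = (x <= n).
Proof. by rewrite /bump; case: leqP => *; apply/idP/idP; lia. Qed.

Lemma bump_neq_lt p q x : p < q -> (bump q x != p) = (x != p).
Proof. by rewrite /bump; case: leqP => *; apply/idP/idP; lia. Qed.

Lemma unbump_bumpC p q x : p < q -> x != p ->
  unbump p (bump q x) = bump q.-1 (unbump p x).
Proof. by rewrite /bump /unbump; do 4?case: leqP => /=; lia. Qed.

Section Entries.
Variables (M : Type) (idx : M) (op : Monoid.com_law idx).

Definition normalized n (f : nat -> nat -> nat -> M) :=
  forall i j k, ~~ [&& i < j, j < k & k <= n] -> f i j k = idx.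

Definition cocycle n (f : nat -> nat -> nat -> M) :=
  forall i j k l, i < j -> j < k -> k < l -> l <= n ->
    op (f i k l) (f i j k) = op (f i j l) (f j k l).

Definition entry n (a : KM2_simplex op n) i j k : M :=
  if [&& i <= n, j <= n & k <= n] then kval a (inord i) (inord j) (inord k)
  else idx.

Lemma entry_ord n (a : KM2_simplex op n) (i j k : 'I_n.+1) :
  entry a i j k = kval a i j k.
Proof. by rewrite /entry !leq_ord !inord_val. Qed.

Lemma entry_normalized n (a : KM2_simplex op n) : normalized n (entry a).
Proof.
move=> i j k; rewrite /entry; case: ifP => // /and3P[hi hj hk] H.
by apply: kjunk; rewrite !inordK //; move: H; rewrite hk; lia.
Qed.

Lemma entry_cocycle n (a : KM2_simplex op n) : cocycle n (entry a).
Proof.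
move=> i j k l ij jk kl ln; rewrite /entry !ifT; try by apply/and3P; split; lia.
by apply: kcoc; rewrite !inordK //; lia.
Qed.

Lemma entry_face n (h : 'I_n.+2) (a : KM2_simplex op n.+1) i j k :
  entry (KM2_face h a) i j k = entry a (bump h i) (bump h j) (bump h k).
Proof.
have hn : h <= n.+1 by rewrite -ltnS.
rewrite /entry !leq_bump_succ //; case: ifP => // /and3P[hi hj hk] /=.
have liftE x : x <= n -> lift h (inord x) = inord (bump h x) :> 'I_n.+2.
  by move=> xn; apply: val_inj; rewrite /= !inordK // ltnS leq_bump_succ.
by rewrite !liftE.
Qed.

Definition simplex_of n f (fN : normalized n f) (fC : cocycle n f) :
  KM2_simplex op n.
Proof.
refine (@KM2S _ _ op n (fun i j k => f i j k) _ _).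
- by move=> i j k H; apply: fN; rewrite leq_ord andbT.
- by move=> i j k l *; apply: fC; rewrite ?leq_ord.
Defined.

Lemma entry_simplex_of n f fN fC i j k :
  entry (@simplex_of n f fN fC) i j k = f i j k.
Proof.
rewrite /entry /=; case: ifP => [/and3P[hi hj hk]|H]; first by rewrite !inordK.
by rewrite fN //; move: H; lia.
Qed.

Lemma simplex_eq n (a b : KM2_simplex op n) :
  (forall i j k, entry a i j k = entry b i j k) -> a = b.
Proof.
move=> eq_ab; have : kval a = kval b.
  by do 3!apply: functional_extensionality => ?; rewrite -!entry_ord.
case: a b {eq_ab} => fa ja ca [fb jb cb] /= E; subst fb.
by f_equal; apply: proof_irrelevance.
Qed.

Lemma simplex1_eq (a b : KM2_simplex op 1) : a = b.
Proof. by apply: simplex_eq => i j k; rewrite !entry_normalized //; lia. Qed.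

Lemma cocycle_avoid n h (f F : nat -> nat -> nat -> M) :
  h <= n.+1 -> (forall i j k, f (bump h i) (bump h j) (bump h k) = F i j k) ->
  cocycle n F ->
  forall a b c d, a < b -> b < c -> c < d -> d <= n.+1 ->
    a != h -> b != h -> c != h -> d != h ->
  op (f a c d) (f a b c) = op (f a b d) (f b c d).
Proof.
move=> hn fF FC a b c d ab bc cd dn ah bh ch dh.
have E x : x != h -> x = bump h (unbump h x) by move=> xh; rewrite unbumpK ?inE.
rewrite (E a) // (E b) // (E c) // (E d) // !fF; apply: FC.
- by rewrite -(ltn_bump2 h) -!E.
- by rewrite -(ltn_bump2 h) -!E.
- by rewrite -(ltn_bump2 h) -!E.
- by rewrite -(leq_bump_succ _ hn) -E.
Qed.

End Entries.

Definition simplex2 (v : nat) : KM2_simplex addn 2.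
Proof.
refine (@simplex_of _ _ addn 2 (fun i j k => v * [&& i == 0, j == 1 & k == 2]) _ _).
- by move=> i j k; lia.
- by move=> i j k l; lia.
Defined.

Lemma entry_simplex2 v : entry (simplex2 v) 0 1 2 = v.
Proof. by rewrite entry_simplex_of muln1. Qed.

Theorem K_nat_2_not_Kan : ~ Kan_complex K_nat_2.
Proof.
case=> _ /(_ 1 (inord 1) (fun i => simplex2 (val i == 3))) [|x fill].
  by move=> *; apply: simplex1_eq.
have fill_at (i : nat) : i < 4 -> i != 1 ->
    entry x (bump i 0) (bump i 1) (bump i 2) = (i == 3).
  move=> i_lt i_neq1; have i_hole : (inord i : 'I_4) != inord 1.
    by apply: contra_neq i_neq1 => /(congr1 val) /=; rewrite !inordK.
  have /(congr1 (fun a => entry a 0 1 2)) := fill _ i_hole.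
  by rewrite entry_face entry_simplex2 /= !inordK // => ->.
have := entry_cocycle x (isT : 0 < 1) (isT : 1 < 2) (isT : 2 < 3) (leqnn 3).
by move: (fill_at 0) (fill_at 2) (fill_at 3) => /= -> // -> // -> //; rewrite addn1.
Qed.

Section Alternating.
Local Open Scope ring_scope.
Variable h : nat -> nat -> nat -> int.

Definition alt i j k : int :=
  if (i < j < k)%N then h i j k
  else if (i < k < j)%N then - h i k j
  else if (k < i < j)%N then h k i j
  else if (j < i < k)%N then - h j i k
  else if (j < k < i)%N then h j k i
  else if (k < j < i)%N then - h k j i
  else 0.

Ltac alt_cases i j k :=
  rewrite /alt; case: (ltngtP i j) => ?; case: (ltngtP j k) => ?;
  case: (ltngtP i k) => ? //=; lia.

Lemma alt_swap12 i j k : alt i j k = - alt j i k.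
Proof. alt_cases i j k. Qed.

Lemma alt_swap23 i j k : alt i j k = - alt i k j.
Proof. alt_cases i j k. Qed.

Lemma alt_rot i j k : alt i j k = alt j k i.
Proof. by rewrite alt_swap12 alt_swap23 opprK. Qed.

Lemma alt_sorted i j k : (i < j < k)%N -> alt i j k = h i j k.
Proof. by rewrite /alt => ->. Qed.

Definition delta i j k l := alt j k l - alt i k l + alt i j l - alt i j k.

Lemma delta_swap12 i j k l : delta i j k l = - delta j i k l.
Proof. rewrite /delta (alt_swap12 j i l) (alt_swap12 j i k); lia. Qed.

Lemma delta_swap23 i j k l : delta i j k l = - delta i k j l.
Proof. rewrite /delta (alt_swap12 k j l) (alt_swap23 i k j); lia. Qed.

Lemma delta_swap34 i j k l : delta i j k l = - delta i j l k.
Proof.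
by rewrite /delta (alt_swap23 j l k) (alt_swap23 i l k) (alt_swap23 i j l); lia.
Qed.

Lemma delta_sorted a b c d : (a < b)%N -> (b < c)%N -> (c < d)%N ->
  delta a b c d = h b c d - h a c d + h a b d - h a b c.
Proof. by move=> ab bc cd; rewrite /delta !alt_sorted; lia. Qed.

Lemma delta_eq0_sorted (D : pred nat) :
  (forall a b c d, (a < b)%N -> (b < c)%N -> (c < d)%N ->
     D a -> D b -> D c -> D d -> delta a b c d = 0) ->
  forall i j k l, D i -> D j -> D k -> D l -> delta i j k l = 0.
Proof.
move=> sorted0.
have tail_sorted i j k l : (j < k)%N -> (k < l)%N -> D i -> D j -> D k -> D l ->
    delta i j k l = 0.
  move=> jk kl Di Dj Dk Dl.
  case: (ltngtP i j) => [ij|ji|<-]; first exact: sorted0.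
    have := delta_swap12 i j k l; case: (ltngtP i k) => [ik|ki|<-].
    - by have := sorted0 j i k l ji ik kl Dj Di Dk Dl; lia.
    - have := delta_swap23 j i k l; case: (ltngtP i l) => [il|li|<-].
      + by have := sorted0 j k i l jk ki il Dj Dk Di Dl; lia.
      + have := delta_swap34 j k i l.
        by have := sorted0 j k l i jk kl li Dj Dk Dl Di; lia.
      + by have := delta_swap34 j k i i; lia.
    - by have := delta_swap23 j i i l; lia.
  by have := delta_swap12 i i k l; lia.
have last_sorted i j k l : (k < l)%N -> D i -> D j -> D k -> D l ->
    delta i j k l = 0.
  move=> kl Di Dj Dk Dl.
  case: (ltngtP j k) => [jk|kj|<-]; first exact: tail_sorted.
    have := delta_swap23 i j k l; case: (ltngtP j l) => [jl|lj|<-].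
    - by have := tail_sorted i k j l kj jl Di Dk Dj Dl; lia.
    - have := delta_swap34 i k j l.
      by have := tail_sorted i k l j kl lj Di Dk Dl Dj; lia.
    - by have := delta_swap34 i k j j; lia.
  by have := delta_swap23 i j j l; lia.
move=> i j k l Di Dj Dk Dl.
case: (ltngtP k l) => [kl|lk|<-]; first exact: last_sorted.
  by have := delta_swap34 i j k l; have := last_sorted i j l k lk Di Dj Dl Dk; lia.
by have := delta_swap34 i j k k; lia.
Qed.

Lemma delta_eq0_pair N x y :
  (forall r s, r != x -> r != y -> s != x -> s != y -> (r <= N)%N -> (s <= N)%N ->
     delta x y r s = 0) ->
  forall a b c d, (a < b)%N -> (b < c)%N -> (c < d)%N -> (d <= N)%N -> (x < y)%N ->
  x \in [:: a; b; c; d] -> y \in [:: a; b; c; d] -> delta a b c d = 0.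
Proof.
move=> xy0 a b c d ab bc cd dN xy; rewrite !inE.
case/or4P=> /eqP ex; case/or4P=> /eqP ey; try lia; rewrite -ex -ey in xy0 *;
  first [ rewrite xy0
        | rewrite delta_swap23 xy0
        | rewrite delta_swap34 delta_swap23 xy0
        | rewrite delta_swap12 delta_swap23 xy0
        | rewrite delta_swap12 delta_swap34 delta_swap23 xy0
        | rewrite delta_swap23 delta_swap12 delta_swap34 delta_swap23 xy0 ]; lia.
Qed.

End Alternating.

Lemma exists_between d (T : orderType d) (x0 : T) (I : eqType) (r : seq I)
    (A B : pred I) (f : I -> T) :
  (forall i j, A i -> B j -> (f i <= f j)%O) ->
  exists t, {in r, forall i, A i -> (f i <= t)%O} /\
            {in r, forall j, B j -> (t <= f j)%O}.
Proof.
move=> leAB; pose m := \big[Order.min/x0]_(j <- r | B j) f j.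
exists (\big[Order.max/m]_(i <- r | A i) f i).
split=> [i ri Ai | j rj Bj]; first exact: le_bigmax_seq.
apply: bigmax_le => [|i Ai]; [exact: ge_bigmin_seq | exact: leAB].
Qed.

Section Glue.
Variables (n p q : nat) (F G : nat -> nat -> nat -> nat).
Hypotheses (n_gt0 : 0 < n) (p_lt_q : p < q) (q_le : q <= n.+1).
Hypotheses (FN : normalized 0 n F) (GN : normalized 0 n G).
Hypotheses (FC : cocycle addn n F) (GC : cocycle addn n G).
Hypothesis FG : forall i j k,
  G (bump p i) (bump p j) (bump p k) = F (bump q.-1 i) (bump q.-1 j) (bump q.-1 k).

Let p_le : p <= n.+1. Proof. exact: ltnW (leq_trans p_lt_q q_le). Qed.

(* On a triple containing both p and q, i + j + k - p - q is its third vertex. *)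
Definition glue (b : nat -> nat) i j k :=
  if [&& i < j, j < k & k <= n.+1] then
    if [&& i != p, j != p & k != p] then F (unbump p i) (unbump p j) (unbump p k)
    else if [&& i != q, j != q & k != q] then G (unbump q i) (unbump q j) (unbump q k)
    else b (i + j + k - p - q)
  else 0.

Lemma glue_normalized b : normalized 0 n.+1 (glue b).
Proof. by move=> i j k /negbTE; rewrite /glue => ->. Qed.

Lemma glue_bump_p b i j k : glue b (bump p i) (bump p j) (bump p k) = F i j k.
Proof.
rewrite /glue !ltn_bump2 leq_bump_succ //; case: ifP => [_|/negbT/FN //].
by rewrite !(eq_sym _ p) !neq_bump !bumpK.
Qed.

Lemma glue_bump_q b i j k : glue b (bump q i) (bump q j) (bump q k) = G i j k.
Proof.
rewrite /glue !ltn_bump2 leq_bump_succ //; case: ifP => [/and3P[ij jk kn]|/negbT/GN //].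
rewrite !(eq_sym _ q) !neq_bump !bumpK /=.
case: ifP => //; rewrite !bump_neq_lt // => /and3P[ip jp kp].
by rewrite !unbump_bumpC // -FG !unbumpK ?inE.
Qed.

Lemma glue_indep b b' i j k :
    [&& i != p, j != p & k != p] || [&& i != q, j != q & k != q] ->
  glue b i j k = glue b' i j k.
Proof.
rewrite /glue; case: ifP => // _; case/orP => H; first by rewrite H.
by case: ifP => // _; rewrite H.
Qed.

Local Open Scope ring_scope.

Definition zglue b i j k : int := glue b i j k.

Lemma alt_zglue_indep b b' i j k :
    [&& i != p, j != p & k != p] || [&& i != q, j != q & k != q] ->
  alt (zglue b) i j k = alt (zglue b') i j k.
Proof. by move=> H; rewrite /alt /zglue !(glue_indep b b') //; move: H; lia. Qed.

Lemma delta_zglue_avoid b v : v \in [:: p; q] ->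
  forall i j k l, (i <= n.+1)%N -> (j <= n.+1)%N -> (k <= n.+1)%N -> (l <= n.+1)%N ->
  i != v -> j != v -> k != v -> l != v -> delta (zglue b) i j k l = 0.
Proof.
move=> v_pq i j k l *.
apply: (@delta_eq0_sorted _ (fun x => (x <= n.+1)%N && (x != v))); try exact/andP.
move=> a b' c d ab bc cd /andP[_ av] /andP[_ bv] /andP[_ cv] /andP[dn dv].
rewrite delta_sorted // /zglue.
move: v_pq; rewrite !inE => /orP[] /eqP v_def; subst v.
- by have /= := cocycle_avoid p_le (glue_bump_p b) FC ab bc cd dn av bv cv dv; lia.
- by have /= := cocycle_avoid q_le (glue_bump_q b) GC ab bc cd dn av bv cv dv; lia.
Qed.

(* A base vertex other than p and q; it exists because n > 0. *)
Let r0 : nat := (if p == 0 then if q == 1 then 2 else 1 else 0)%N.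

Let r0_valid : [/\ (r0 <= n.+1)%N, r0 != p & r0 != q].
Proof. by rewrite /r0; case: eqP => ?; [case: eqP => ?|]; split; lia. Qed.

Let X0 := zglue (fun=> 0%N).

(* The oriented entry of the filler on (p, q, r) will be phi r - t for a
   suitable constant t. *)
Definition phi r := alt X0 p r0 r - alt X0 q r0 r.

Lemma phi_sub r s : (r <= n.+1)%N -> (s <= n.+1)%N ->
  r != p -> r != q -> s != p -> s != q ->
  phi s - phi r = alt X0 p r s - alt X0 q r s.
Proof.
move=> rn sn rp rq sp sq; case: r0_valid => r0n r0p r0q.
have avoid_q := @delta_zglue_avoid (fun=> 0%N) q (mem_last p [:: q]).
have avoid_p := @delta_zglue_avoid (fun=> 0%N) p (mem_head p [:: q]).
have := avoid_q p r0 r s p_le r0n rn sn (negbT (ltn_eqF p_lt_q)) r0q rq sq.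
have := avoid_p q r0 r s q_le r0n rn sn (negbT (gtn_eqF p_lt_q)) r0p rp sp.
by rewrite /delta /phi -/X0; lia.
Qed.

Lemma phi_inner_outer r s : (p < r < q)%N -> (s <= n.+1)%N -> (s < p)%N || (q < s)%N ->
  phi r <= phi s.
Proof.
move=> /andP[pr rq] sn s_out; rewrite -subr_ge0 phi_sub //; try lia.
case/orP: s_out => [sp|qs].
- rewrite [alt _ p r s]alt_rot [alt _ r s p]alt_rot.
  rewrite [alt _ q r s]alt_rot [alt _ r s q]alt_rot.
  by rewrite [alt _ s q r]alt_swap23 !alt_sorted /X0 /zglue; lia.
- by rewrite [alt _ q r s]alt_swap12 !alt_sorted /X0 /zglue; lia.
Qed.

Lemma exists_threshold : exists t : int,
  (forall r, (p < r < q)%N -> phi r <= t) /\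
  (forall s, (s <= n.+1)%N -> (s < p)%N || (q < s)%N -> t <= phi s).
Proof.
have [|t [inner outer]] := @exists_between _ _ 0 _ (iota 0 n.+2)
  (fun r => (p < r < q)%N) (fun s => (s <= n.+1)%N && ((s < p)%N || (q < s)%N)) phi.
  by move=> r s rI /andP[sn sO]; exact: phi_inner_outer.
exists t; split=> [r rI|s sn sO]; [apply: inner | apply: outer];
  rewrite ?mem_iota ?sn //=; lia.
Qed.

Lemma glue_pq b x y z : (x < y)%N -> (y < z)%N -> (z <= n.+1)%N ->
  p \in [:: x; y; z] -> q \in [:: x; y; z] -> glue b x y z = b (x + y + z - p - q)%N.
Proof.
rewrite !inE => xy yz zn pxyz qxyz; rewrite /glue ifT; last by apply/and3P.
by rewrite ifF ?ifF //; apply/negbTE; lia.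
Qed.

Section Threshold.
Variable t : int.
Hypothesis phi_le : forall r, (p < r < q)%N -> phi r <= t.
Hypothesis le_phi : forall s, (s <= n.+1)%N -> (s < p)%N || (q < s)%N -> t <= phi s.

Definition pq_entry r : nat := `|phi r - t|%N.

Lemma alt_zglue_pq r : (r <= n.+1)%N -> r != p -> r != q ->
  alt (zglue pq_entry) p q r = phi r - t.
Proof.
move=> rn rp rq; case: (ltngtP r p) => [rp'|pr|/eqP]; last by rewrite (negbTE rp).
  rewrite alt_rot alt_rot alt_sorted /zglue ?glue_pq ?inE ?eqxx ?orbT //; try lia.
  by have := le_phi rn; rewrite rp' /pq_entry (_ : (r + p + q - p - q)%N = r); lia.
case: (ltngtP r q) => [rq'|qr|/eqP]; last by rewrite (negbTE rq).
  rewrite alt_swap23 alt_sorted /zglue ?glue_pq ?inE ?eqxx ?orbT //; try lia.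
  by have := @phi_le r; rewrite pr rq' /pq_entry (_ : (p + r + q - p - q)%N = r); lia.
rewrite alt_sorted /zglue ?glue_pq ?inE ?eqxx ?orbT //; try lia.
by have := le_phi rn; rewrite qr orbT /pq_entry (_ : (p + q + r - p - q)%N = r); lia.
Qed.

Lemma delta_zglue_pq r s : r != p -> r != q -> s != p -> s != q ->
  (r <= n.+1)%N -> (s <= n.+1)%N -> delta (zglue pq_entry) p q r s = 0.
Proof.
move=> rp rq sp sq rn sn; rewrite /delta !alt_zglue_pq //.
rewrite (alt_zglue_indep _ (fun=> 0%N)); last by rewrite rp sp (negbT (gtn_eqF p_lt_q)).
rewrite [alt _ p r s](alt_zglue_indep _ (fun=> 0%N)); last first.
  by rewrite rq sq (negbT (ltn_eqF p_lt_q)) orbT.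
by have := phi_sub rn sn rp rq sp sq; rewrite -/X0; lia.
Qed.

Lemma glue_cocycle_of_threshold : cocycle addn n.+1 (glue pq_entry).
Proof.
move=> a b c d ab bc cd dn.
have [/and4P[ap bp cp dp]|not_avoid_p] := boolP [&& a != p, b != p, c != p & d != p].
  by have := cocycle_avoid p_le (glue_bump_p pq_entry) FC ab bc cd dn ap bp cp dp.
have [/and4P[aq bq cq dq]|not_avoid_q] := boolP [&& a != q, b != q, c != q & d != q].
  by have := cocycle_avoid q_le (glue_bump_q pq_entry) GC ab bc cd dn aq bq cq dq.
have : delta (zglue pq_entry) a b c d = 0.
  apply: (delta_eq0_pair delta_zglue_pq) => //; rewrite !inE; lia.
by rewrite delta_sorted // /zglue /=; lia.
Qed.

End Threshold.

Lemma glue_cocycle : exists b, cocycle addn n.+1 (glue b).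
Proof.
have [t [phi_le le_phi]] := exists_threshold.
by exists (pq_entry t); exact: glue_cocycle_of_threshold.
Qed.

End Glue.

Theorem K_nat_2_SS : SS_complex K_nat_2.
Proof.
move=> m p q p_lt_q q_le cp cq faces_eq.
have compat i j k : entry cq (bump p i) (bump p j) (bump p k) =
                    entry cp (bump q.-1 i) (bump q.-1 j) (bump q.-1 k).
  have := congr1 (fun a => entry a i j k) faces_eq.
  by rewrite /= !entry_face !inordK //; lia.
have [b glueC] := glue_cocycle (ltn0Sn m) p_lt_q q_le (entry_normalized cp)
  (entry_normalized cq) (entry_cocycle cp) (entry_cocycle cq) compat.
exists (simplex_of (glue_normalized p q (entry cp) (entry cq) b) glueC).
split; apply: simplex_eq => i j k; rewrite entry_face entry_simplex_of inordK; try lia.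
- exact: glue_bump_p _ p_lt_q q_le (entry_normalized cp) b i j k.
- exact: glue_bump_q p_lt_q q_le (entry_normalized cq) compat b i j k.
Qed.

Theorem mainTheorem1 : SS_complex K_nat_2 /\ ~ Kan_complex K_nat_2.
Proof. exact: (conj K_nat_2_SS K_nat_2_not_Kan). Qed.
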